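(* Let $\mathcal{M}=(S,P,E,s_{init},L)$ be a CTMC with absorbing goal state $g$, let $\varepsilon,\delta\geq0$, $q=\max_{p\in S}E(p)$ and $t\geq0$. For all $s,s'\in S$ with $s\sim_{\varepsilon,\delta}s'$, $$\left|\mathrm{Pr}_s(\lozenge^{\leq t}g)-\mathrm{Pr}_{s'}(\lozenge^{\leq t}g)\right|\leq 1-e^{-q t(e^{\delta}(1+\varepsilon)-1)}.$$
   Context: A CTMC $(S,P,E,s_{init},L)$: finite $S$, $P\colon S\to\mathrm{Distr}(S)$ ($P(s,A)=\sum_{a\in A}P(s,a)$), $E\colon S\to\mathbb{R}_{>0}$, initial state, labeling $L$; residence time in $s$ is exponential with rate $E(s)$, then a jump to $s'$ with probability $P(s,s')$. $\mathrm{Pr}_s(\lozenge^{\leq t}g)$: probability that the CTMC started in $s$ reaches $g$ within time $t$. For $R\subseteq S\times S$, $R(A)=\{t'\mid\exists a\in A:(a,t')\in R\}$. A reflexive symmetric $R$ is an $(\varepsilon,\delta)$-bisimulation if for all $(s,s')\in R$: $L(s)=L(s')$, $|\ln E(s)-\ln E(s')|\leq\delta$, and $P(s,A)\leq P(s',R(A))+\varepsilon$ for all $A\subseteq S$; $s\sim_{\varepsilon,\delta}s'$ if some such relation contains $(s,s')$. Standing assumption: $g$ is the unique goal state, absorbing and uniquely labeled, and all states from which $g$ is unreachable are collapsed into one absorbing uniquely labeled fail state. *)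

From HB Require Import structures.
From mathcomp Require Import all_boot all_order all_algebra.
From mathcomp Require Import Rstruct.
From Stdlib Require Import Reals.
From Coquelicot Require Import Coquelicot.

Set Implicit Arguments.
Unset Strict Implicit.
Unset Printing Implicit Defensive.

Section RSums.
Local Open Scope ring_scope.
Definition rsum (I : finType) (F : I -> R) : R := \sum_(i : I) F i.
Definition rsum_in (I : finType) (A : {set I}) (F : I -> R) : R :=
  \sum_(i in A) F i.
End RSums.

Local Open Scope R_scope.

Record ctmc (S : finType) (Lab : Type) := CTMC {
  P : S -> S -> R;
  E : S -> R;
  s_init : S;
  L : S -> Lab;
  P_ge0 : forall s s', 0 <= P s s';
  P_sum1 : forall s, rsum (P s) = 1;
  E_pos : forall s, 0 < E s
}.

Section CTMCDefs.
Variables (S : finType) (Lab : Type) (M : ctmc S Lab).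

Definition Pset (s : S) (A : {set S}) : R := rsum_in A (P M s).

Definition rimage (Rel : rel S) (A : {set S}) : {set S} :=
  [set t' | [exists a in A, Rel a t']].

Definition is_eps_delta_bisim (eps delta : R) (Rel : rel S) : Prop :=
  (forall s, Rel s s) /\ (forall s s', Rel s s' -> Rel s' s) /\
  forall s s', Rel s s' ->
    L M s = L M s' /\
    Rabs (ln (E M s) - ln (E M s')) <= delta /\
    forall A : {set S}, Pset s A <= Pset s' (rimage Rel A) + eps.

Definition bisimilar (eps delta : R) (s s' : S) : Prop :=
  exists Rel : rel S, is_eps_delta_bisim eps delta Rel /\ Rel s s'.

Definition edge : rel S := [rel a b | Rlt_dec 0 (P M a b)].
Definition reachable (s s' : S) : bool := connect edge s s'.

Definition goal_assumptions (g : S) : Prop :=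
  P M g g = 1 /\ (forall s, L M s = L M g -> s = g) /\
  (forall s s', ~~ reachable s g -> ~~ reachable s' g -> s = s') /\
  (forall f, ~~ reachable f g ->
     P M f f = 1 /\ forall s, L M s = L M f -> s = f).

(* Time-bounded reachability probability Pr_s(<>^{<=t} g), defined as the
   least solution of the standard Volterra integral equation
   (Baier-Haverkort-Hermanns-Katoen): approximant n is the probability of
   reaching g within time t using at most n jumps. *)
Fixpoint reach_approx (g : S) (n : nat) (s : S) (t : R) : R :=
  if s == g then 1 else
  match n with
  | O => 0
  | m.+1 =>
      RInt (fun x => E M s * exp (- (E M s * x)) *
                     rsum (fun s' => P M s s' * reach_approx g m s' (t - x)))
           0 t
  end.

Definition reach_prob (g : S) (s : S) (t : R) : R :=
  real (Sup_seq (fun n => Finite (reach_approx g n s t))).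

Definition max_rate : R := \big[Rmax/0]_(p : S) E M p.
End CTMCDefs.

From mathcomp Require Import all_boot all_order all_algebra.
From mathcomp Require Import Rstruct.
From Stdlib Require Import Reals Lra Psatz FunctionalExtensionality.
From Coquelicot Require Import Coquelicot.

(* Pr_s(<>^{<=t} g) is the supremum over n of the probability r_n(s, t) of
   reaching g within time t in at most n jumps, so it suffices to show
   |r_n(s, t) - r_n(s', t)| <= D(t) := 1 - exp (- c t), c = q (e^delta (1 + eps) - 1),
   for all related s, s', by induction on n.  A jump writes r_(n+1)(s, .) as the
   convolution of the density E(s) exp (- E(s) x) with the expected value h_s of
   r_n at the successor state.  A layer-cake argument over the level sets of r_n
   turns P(s, A) <= P(s', R(A)) + eps into |h_s(y) - h_s'(y)| <= eps + (1 - eps) D(y).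
   If E(s) <= E(s') <= e^delta E(s), the difference of the two convolutions is then
   bounded pointwise by K exp (- K x) + (c - E(s')) exp (- E(s') x) exp (- c (t - x))
   for K = E(s) or E(s'), whose integral over [0, t] is at most D(t). *)

Set Implicit Arguments.
Unset Strict Implicit.
Unset Printing Implicit Defensive.
Import Order.TTheory GRing.Theory Num.Theory.

Local Open Scope R_scope.

Section FiniteSums.
Variable I : finType.
Implicit Types (F G p : I -> R) (A : {set I}).

Lemma rsum_ge0 F : (forall i, 0 <= F i) -> 0 <= rsum F.
Proof. by move=> F0; apply/RleP/sumr_ge0 => i _; apply/RleP. Qed.

Lemma ler_rsum F G : (forall i, F i <= G i) -> rsum F <= rsum G.
Proof. by move=> FG; apply/RleP/ler_sum => i _; apply/RleP. Qed.

Lemma rsumD F G : rsum (fun i => F i + G i) = rsum F + rsum G.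
Proof. exact: big_split. Qed.

Lemma rsum_mull F k : rsum (fun i => k * F i) = k * rsum F.
Proof. by rewrite /rsum -mulr_sumr. Qed.

Lemma rsum_mkcond A F : rsum (fun i => if i \in A then F i else 0) = rsum_in A F.
Proof. by rewrite /rsum /rsum_in [RHS]big_mkcond. Qed.

Lemma rsum_in_mulr A F m : rsum_in A (fun i => F i * m) = rsum_in A F * m.
Proof. by rewrite /rsum_in -mulr_suml. Qed.

Lemma continuous_rsum (F : I -> R -> R) x :
  (forall i, continuous (F i) x) -> continuous (fun y => rsum (F^~ y)) x.
Proof.
move=> Fc; change (continuous (fun y => \big[Rplus/0]_(i <- index_enum I) F i y) x).
elim: (index_enum I) => [|i r IHr].
  by under [fun y => _]functional_extensionality do rewrite big_nil; exact: continuous_const.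
have -> : (fun y => \big[Rplus/0]_(j <- i :: r) F j y) =
          (fun y => F i y + \big[Rplus/0]_(j <- r) F j y).
  by apply: functional_extensionality => y; rewrite big_cons.
exact: continuous_plus.
Qed.

Definition expect p F := rsum (fun i => p i * F i).

Lemma continuous_expect p (F : I -> R -> R) x :
  (forall i, continuous (F i) x) -> continuous (fun y => expect p (F^~ y)) x.
Proof.
move=> Fc; apply: continuous_rsum => i.
by apply: (continuous_mult (fun=> p i)); [apply: continuous_const | apply: Fc].
Qed.

Lemma expect_bounds p F : (forall i, 0 <= p i) -> rsum p = 1 ->
  (forall i, 0 <= F i <= 1) -> 0 <= expect p F <= 1.
Proof.
move=> p0 p1 F01; split.
  by apply: rsum_ge0 => i; have := p0 i; have := F01 i; nra.
by rewrite -p1; apply: ler_rsum => i; have := p0 i; have := F01 i; nra.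
Qed.

End FiniteSums.

Section LayerCake.
Variables (I : finType) (p p' : I -> R) (Rel : rel I) (eps : R).
Hypotheses (p_ge0 : forall a, 0 <= p a) (p'_ge0 : forall b, 0 <= p' b).
Hypothesis eps_ge0 : 0 <= eps.
Hypothesis p_le_rimage :
  forall A : {set I}, rsum_in A p <= rsum_in (rimage Rel A) p' + eps.

Lemma layer_cake_peel (f g : I -> R) (m M : R) : 0 < m ->
  (forall a, f a = 0 \/ m <= f a) -> (forall b, 0 <= g b) ->
  (forall a b, Rel a b -> f a <= g b) ->
  expect p (fun a => Rmax (f a - m) 0) <=
    expect p' (fun b => Rmax (g b - m) 0) + eps * (M - m) ->
  expect p f <= expect p' g + eps * M.
Proof.
move=> m0 f0m g0 fg IH.
set A := [set a | (0 < f a)%O].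
have fA a : a \in A -> m <= f a.
  by rewrite inE => /RltP; case: (f0m a) => [->|]; lra.
have f_split : expect p f = expect p (fun a => Rmax (f a - m) 0) + rsum_in A p * m.
  rewrite -rsum_in_mulr -rsum_mkcond /expect -rsumD; congr rsum.
  apply: functional_extensionality => a; case: ifP => aA.
    by rewrite Rmax_left; [ring | have := fA a aA; lra].
  have fa0 : f a = 0.
    case: (f0m a) => // mf; move: aA; rewrite inE.
    by move/RltP: (Rlt_le_trans _ _ _ m0 mf) => ->.
  by rewrite fa0 Rmax_right; [ring | lra].
have g_split : expect p' g =
    expect p' (fun b => Rmax (g b - m) 0) + expect p' (fun b => Rmin (g b) m).
  rewrite /expect -rsumD; congr rsum; apply: functional_extensionality => b.
  by rewrite -Rmult_plus_distr_l /Rmax /Rmin; do 2 case: Rle_dec; intros; ring_simplify; lra.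
have rimage_le : rsum_in (rimage Rel A) p' * m <= expect p' (fun b => Rmin (g b) m).
  rewrite -rsum_in_mulr -rsum_mkcond; apply: ler_rsum => b.
  have := p'_ge0 b; case: ifP => [|_].
    rewrite inE => /existsP [a /andP [aA Rab]].
    have := fA a aA; have := fg a b Rab; rewrite /Rmin; case: Rle_dec; nra.
  have := g0 b; rewrite /Rmin; case: Rle_dec; nra.
have := p_le_rimage A; nra.
Qed.

Lemma layer_cake (f g : I -> R) (M : R) : 0 <= M ->
  (forall a, 0 <= f a <= M) -> (forall b, 0 <= g b) ->
  (forall a b, Rel a b -> f a <= g b) ->
  expect p f <= expect p' g + eps * M.
Proof.
have [n] := ubnP #|[set a | (0 < f a)%O]|.
elim: n f g M => // n IHn f g M; set A := [set a | _] => lt_A_n M0 f0M g0 fg.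
have fA0 a : a \notin A -> f a = 0.
  by rewrite inE => /RltP; have := f0M a; lra.
have rhs_ge0 : 0 <= expect p' g + eps * M.
  apply: Rplus_le_le_0_compat; last exact: Rmult_le_pos.
  by apply: rsum_ge0 => b; apply: Rmult_le_pos.
case: (set_0Vmem A) => [A0 | [a1 a1A]].
  suff -> : expect p f = 0 by [].
  by rewrite /expect /rsum big1 // => a _; rewrite fA0 ?A0 ?inE ?Rmult_0_r.
have [a0 a0A a0_min] := arg_minP f a1A.
have {}a0A : a0 \in A by [].
set m := f a0 in a0_min; have m0 : 0 < m by move: a0A; rewrite inE => /RltP.
have mM : m <= M := proj2 (f0M a0).
apply: (layer_cake_peel (m := m)) => //.
- move=> b; case: (boolP (b \in A)) => bA; last by left; apply: fA0.
  by right; apply/RleP/a0_min.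
- set f1 := fun a => _; apply: IHn => [||a|b|a b Rab].
  + apply: (leq_ltn_trans (n := #|A :\ a0|)).
      apply/subset_leq_card/subsetP => b; rewrite !inE => /RltP.
      rewrite /f1 /Rmax; case: Rle_dec => [|_ f1b]; first lra.
      apply/andP; split; last by apply/RltP; lra.
      by apply/eqP => ba0; move: f1b; rewrite ba0 /m; lra.
    by move: lt_A_n; rewrite (cardsD1 a0 A) a0A.
  + lra.
  + by rewrite /f1 /Rmax; case: Rle_dec; have := f0M a; lra.
  + by rewrite /Rmax; case: Rle_dec; lra.
  + by have := fg a b Rab; rewrite /f1 /Rmax; do 2 case: Rle_dec; lra.
Qed.

Lemma expect_le_rel (F : I -> R) (beta : R) : rsum p = 1 ->
  (forall a, 0 <= F a <= 1) -> 0 <= beta <= 1 ->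
  (forall a b, Rel a b -> F a - F b <= beta) ->
  expect p F <= expect p' F + (eps + (1 - eps) * beta).
Proof.
move=> p1 F01 beta01 F_rel.
pose f a := Rmax (F a - beta) 0.
have F_le : expect p F <= expect p f + beta.
  rewrite -[X in _ + X]Rmult_1_r -p1 -rsum_mull /expect -rsumD.
  apply: ler_rsum => a; have := p_ge0 a.
  by rewrite /f /Rmax; case: Rle_dec => ? ?; nra.
have f_le : expect p f <= expect p' F + eps * (1 - beta).
  apply: layer_cake => [|a|b|a b Rab]; first lra.
  - by rewrite /f /Rmax; case: Rle_dec; have := F01 a; lra.
  - exact: (proj1 (F01 b)).
  - by have := F_rel a b Rab; rewrite /f /Rmax; case: Rle_dec; have := F01 b; lra.
lra.
Qed.

End LayerCake.

Lemma Sup_seq_le_bound (a : nat -> R) c :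
  (forall n, a n <= c) -> Rbar_le (Sup_seq (fun n => Finite (a n))) c.
Proof.
by move=> a_le; apply: Rbar_not_lt_le => /Sup_seq_minor_lt [n] /=; have := a_le n; lra.
Qed.

Lemma real_Sup_seq_bounds (a : nat -> R) c : (forall n, a n <= c) ->
  (forall n, a n <= real (Sup_seq (fun n => Finite (a n)))) /\
  real (Sup_seq (fun n => Finite (a n))) <= c.
Proof.
move=> a_le; have := Sup_seq_le_bound a_le.
have := fun n => Sup_seq_minor_le (fun n => Finite (a n)) (a n) n (Rbar_le_refl _).
by case: (Sup_seq _) => [x||] // a_le_sup; have := a_le_sup O.
Qed.

Lemma Rabs_real_Sup_seq_sub_le (a b : nat -> R) c B :
  (forall n, a n <= c) -> (forall n, b n <= c) -> (forall n, Rabs (a n - b n) <= B) ->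
  Rabs (real (Sup_seq (fun n => Finite (a n))) - real (Sup_seq (fun n => Finite (b n))))
    <= B.
Proof.
move=> a_le b_le ab_B.
have sup_le (u v : nat -> R) : (forall n, u n <= c) -> (forall n, v n <= c) ->
    (forall n, u n - v n <= B) ->
    real (Sup_seq (fun n => Finite (u n))) <= real (Sup_seq (fun n => Finite (v n))) + B.
  move=> u_le v_le uv_B; have [v_sup _] := real_Sup_seq_bounds v_le.
  by apply: (proj2 (real_Sup_seq_bounds _)) => n; have := v_sup n; have := uv_B n; lra.
have ab_le n : a n - b n <= B by have /Rabs_le_between := ab_B n; lra.
have ba_le n : b n - a n <= B by have /Rabs_le_between := ab_B n; lra.
have := sup_le a b a_le b_le ab_le; have := sup_le b a b_le a_le ba_le.
by move=> ? ?; apply: Rabs_le; lra.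
Qed.

Lemma continuous_RInt_0 (k : R -> R) t :
  (forall y, continuous k y) -> continuous (fun t => RInt k 0 t) t.
Proof.
move=> k_cont; apply: ex_derive_continuous; exists (k t).
apply: is_derive_RInt; last exact: k_cont.
apply: filter_forall => b; apply: RInt_correct.
by apply: ex_RInt_continuous => y _; apply: k_cont.
Qed.

Definition expconv (r : R) (h : R -> R) (t : R) : R :=
  RInt (fun x => r * exp (- (r * x)) * h (t - x)) 0 t.

Section ExpConv.
Variables (r : R) (h : R -> R).
Hypothesis h_cont : forall y, continuous h y.

Lemma continuous_expconv_integrand t x :
  continuous (fun x => r * exp (- (r * x)) * h (t - x)) x.
Proof.
apply: (continuous_mult (fun x => r * exp (- (r * x))) (fun x => h (t - x))).
  by apply: ex_derive_continuous; auto_derive.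
apply: (continuous_comp (fun x => t - x) h); last exact: h_cont.
by apply: ex_derive_continuous; auto_derive.
Qed.

Lemma ex_RInt_expconv t a b : ex_RInt (fun x => r * exp (- (r * x)) * h (t - x)) a b.
Proof. by apply: ex_RInt_continuous => x _; apply: continuous_expconv_integrand. Qed.

Lemma continuous_exp_mul_h x : continuous (fun y => exp (r * y) * h y) x.
Proof.
apply: (continuous_mult (fun y => exp (r * y)) h); last exact: h_cont.
by apply: ex_derive_continuous; auto_derive.
Qed.

Lemma expconvE t :
  expconv r h t = r * exp (- (r * t)) * RInt (fun y => exp (r * y) * h y) 0 t.
Proof.
pose k y := scal (r * exp (- (r * t))) (exp (r * y) * h y).
have k_cont y : continuous k y.
  by apply: continuous_scal_r; apply: continuous_exp_mul_h.
have -> : expconv r h t = opp (RInt (fun x => scal (-1) (k (t - x))) 0 t).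
  rewrite /expconv -RInt_opp; last first.
    apply: ex_RInt_continuous => x _.
    apply: (continuous_scal_r _ (fun x => k (t - x))).
    apply: (continuous_comp (fun x => t - x) k); last exact: k_cont.
    by apply: ex_derive_continuous; auto_derive.
  apply: RInt_ext => x _; rewrite /opp /scal /= /mult /= /k /scal /= /mult /=.
  have -> : exp (- (r * x)) = exp (- (r * t)) * exp (r * (t - x)).
    by rewrite -exp_plus; f_equal; ring.
  ring.
rewrite (RInt_comp k (fun x => t - x) (fun _ => -1)); first last.
- by move=> x _; split; [auto_derive; [|ring] | exact: continuous_const].
- by move=> x _; apply: k_cont.
rewrite Rminus_diag Rminus_0_r opp_RInt_swap; last by apply: ex_RInt_continuous => x _.
rewrite RInt_scal //; by apply: ex_RInt_continuous => x _; apply: continuous_exp_mul_h.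
Qed.

Lemma continuous_expconv t : continuous (expconv r h) t.
Proof.
have -> : expconv r h = fun t => r * exp (- (r * t)) * RInt (fun y => exp (r * y) * h y) 0 t.
  by apply: functional_extensionality => u; rewrite expconvE.
apply: (continuous_mult (fun t => r * exp (- (r * t)))
                       (fun t => RInt (fun y => exp (r * y) * h y) 0 t)).
  by apply: ex_derive_continuous; auto_derive.
exact: continuous_RInt_0 continuous_exp_mul_h.
Qed.

End ExpConv.

Lemma exp_le_compat x y : x <= y -> exp x <= exp y.
Proof. by case/Rle_lt_or_eq_dec => [/exp_increasing/Rlt_le | ->] //; apply: Rle_refl. Qed.

Lemma one_sub_exp_bounds c y : 0 <= c -> 0 <= y -> 0 <= 1 - exp (- (c * y)) <= 1.
Proof.
move=> c0 y0; have : exp (- (c * y)) <= 1 by rewrite -exp_0; apply: exp_le_compat; nra.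
by have := exp_pos (- (c * y)); lra.
Qed.

Lemma RInt_exp_majorant K l c t :
  RInt (fun x => K * exp (- (K * x)) + (c - l) * (exp (- (l * x)) * exp (- (c * (t - x))))) 0 t
  = 1 - exp (- (c * t)) + (exp (- (l * t)) - exp (- (K * t))).
Proof.
apply: is_RInt_unique.
have -> : 1 - exp (- (c * t)) + (exp (- (l * t)) - exp (- (K * t))) =
    minus (- exp (- (K * t)) + exp (- (l * t)) * exp (- (c * (t - t))))
          (- exp (- (K * 0)) + exp (- (l * 0)) * exp (- (c * (t - 0)))).
  by rewrite /minus /plus /opp /= Rminus_diag !Rmult_0_r Ropp_0 exp_0 Rminus_0_r; ring.
apply: (is_RInt_derive (fun x => - exp (- (K * x)) + exp (- (l * x)) * exp (- (c * (t - x)))))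
  => x _.
  by auto_derive; [|rewrite /Rminus; ring].
by apply: ex_derive_continuous; auto_derive.
Qed.

Lemma RInt_le_exp_majorant (k : R -> R) K l c t :
  0 <= t -> K <= l -> (forall x, continuous k x) ->
  (forall x, 0 < x < t ->
     k x <= K * exp (- (K * x)) + (c - l) * (exp (- (l * x)) * exp (- (c * (t - x))))) ->
  RInt k 0 t <= 1 - exp (- (c * t)).
Proof.
move=> t0 Kl k_cont k_le.
have : exp (- (l * t)) <= exp (- (K * t)) by apply: exp_le_compat; nra.
suff : RInt k 0 t <= 1 - exp (- (c * t)) + (exp (- (l * t)) - exp (- (K * t))) by lra.
rewrite -RInt_exp_majorant; apply: RInt_le => //.
  by apply: ex_RInt_continuous => x _.
by apply: ex_RInt_continuous => x _; apply: ex_derive_continuous; auto_derive.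
Qed.

Lemma expconv_bounds r h t : 0 < r -> 0 <= t -> (forall y, continuous h y) ->
  (forall y, 0 <= y <= t -> 0 <= h y <= 1) -> 0 <= expconv r h t <= 1.
Proof.
move=> r0 t0 h_cont h01.
have h01' x : 0 < x < t -> 0 <= h (t - x) <= 1 by move=> xt; apply: h01; lra.
split.
  apply: RInt_ge_0 => //; first exact: ex_RInt_expconv.
  move=> x /h01' hx; have := exp_pos (- (r * x)) => ?.
  by apply: Rmult_le_pos; [apply: Rmult_le_pos|]; lra.
have : 0 < exp (- (r * t)) := exp_pos _.
suff : expconv r h t <= 1 - exp (- (r * t)) by lra.
apply: RInt_le_exp_majorant (Rle_refl r) _ _ => //.
  exact: continuous_expconv_integrand.
move=> x /h01' hx; rewrite Rminus_diag Rmult_0_l Rplus_0_r -[X in _ <= X]Rmult_1_r.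
by have := exp_pos (- (r * x)) => ?; apply: Rmult_le_compat_l; [apply: Rmult_le_pos|]; lra.
Qed.

Section ExpConvDiff.
Variables (r r' eps c t : R) (h h' : R -> R).
Hypotheses (r_gt0 : 0 < r) (r_le_r' : r <= r') (t_ge0 : 0 <= t).
Hypothesis c_ge : r' - r + r * eps <= c.
Hypotheses (h_cont : forall y, continuous h y) (h'_cont : forall y, continuous h' y).
Hypothesis h_h'_bounds : forall y, 0 <= y <= t ->
  0 <= h y <= 1 /\ 0 <= h' y <= 1 /\
  Rabs (h y - h' y) <= eps + (1 - eps) * (1 - exp (- (c * y))).

Let pointwise_facts x : 0 < x < t ->
  exp (- (r' * x)) <= exp (- (r * x)) /\ 0 < exp (- (r' * x)) /\ 0 < exp (- (c * (t - x))) /\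
  0 <= h (t - x) <= 1 /\ 0 <= h' (t - x) <= 1 /\
  Rabs (h (t - x) - h' (t - x)) <= 1 - (1 - eps) * exp (- (c * (t - x))).
Proof.
move=> xt; have [? [? hh']] := h_h'_bounds (y := t - x) ltac:(lra).
do 3 (split; first (try apply: exp_le_compat; try apply: exp_pos; nra)).
by do 2 (split=> //); lra.
Qed.

Lemma expconv_fast_sub_slow_le : expconv r' h' t - expconv r h t <= 1 - exp (- (c * t)).
Proof.
rewrite /expconv -[_ - _](RInt_minus _ _ _ _ (ex_RInt_expconv r' h'_cont t 0 t)
                                               (ex_RInt_expconv r h_cont t 0 t)).
apply: (RInt_le_exp_majorant t_ge0 (Rle_refl r')) => [x|x /pointwise_facts].
  by apply: continuous_minus; apply: continuous_expconv_integrand.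
rewrite /minus /plus /opp /=.
set A := exp (- (r * x)); set B := exp (- (r' * x)); set C := exp (- (c * (t - x))).
set u := h (t - x); set v := h' (t - x).
move=> [BA [B0 [C0 [u01 [v01 /Rabs_le_between huv]]]]].
have rBu_le : r * B * u <= r * A * u by apply: Rmult_le_compat_r; nra.
have : 0 <= B * (C * (c - r' + r * (1 - eps))) by apply: Rmult_le_pos; nra.
have : B * ((r' - r) * v + r * (v - u)) <= B * (r' - r * (1 - eps) * C)
  by apply: Rmult_le_compat_l; nra.
nra.
Qed.

Lemma expconv_slow_sub_fast_le : expconv r h t - expconv r' h' t <= 1 - exp (- (c * t)).
Proof.
rewrite /expconv -[_ - _](RInt_minus _ _ _ _ (ex_RInt_expconv r h_cont t 0 t)
                                               (ex_RInt_expconv r' h'_cont t 0 t)).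
apply: (RInt_le_exp_majorant t_ge0 r_le_r') => [x|x /pointwise_facts].
  by apply: continuous_minus; apply: continuous_expconv_integrand.
rewrite /minus /plus /opp /=.
set A := exp (- (r * x)); set B := exp (- (r' * x)); set C := exp (- (c * (t - x))).
set u := h (t - x); set v := h' (t - x).
move=> [BA [B0 [C0 [u01 [v01 /Rabs_le_between huv]]]]].
have : r * (A - B) * u <= r * (A - B).
  by rewrite -[X in _ <= X]Rmult_1_r; apply: Rmult_le_compat_l; nra.
have : r * B * (u - v) <= r * B * (1 - (1 - eps) * C) by apply: Rmult_le_compat_l; nra.
have : 0 <= (r' - r) * B * v by apply: Rmult_le_pos; nra.
have : 0 <= B * (C * (c - r' + r * (1 - eps))) by apply: Rmult_le_pos; nra.
nra.
Qed.

Lemma Rabs_expconv_sub_le : Rabs (expconv r h t - expconv r' h' t) <= 1 - exp (- (c * t)).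
Proof.
by apply: Rabs_le; have := expconv_slow_sub_fast_le; have := expconv_fast_sub_slow_le; lra.
Qed.

End ExpConvDiff.

Section Reachability.
Variables (S : finType) (Lab : Type) (M : ctmc S Lab) (g : S).

Lemma E_le_max_rate p : E M p <= max_rate M.
Proof.
rewrite /max_rate; have : p \in index_enum S by rewrite mem_index_enum.
elim: (index_enum S) => [|a r IHr] //; rewrite inE big_cons => /orP [/eqP <-|/IHr].
  exact: Rmax_l.
by move/Rle_trans; apply; apply: Rmax_r.
Qed.

Lemma max_rate_ge0 : 0 <= max_rate M.
Proof. by apply: Rle_trans (E_le_max_rate g); apply: Rlt_le; apply: E_pos. Qed.

Definition step_reach n s u := expect (P M s) (reach_approx M g n ^~ u).

Lemma reach_approxS n s : s != g ->
  reach_approx M g n.+1 s = expconv (E M s) (step_reach n s).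
Proof. by move=> /negbTE sg; apply: functional_extensionality => t; rewrite /= sg. Qed.

Lemma continuous_reach_approx n s t : continuous (reach_approx M g n s) t.
Proof.
elim: n s t => [|n IHn] s t; first by case: (s == g); apply: continuous_const.
case: (boolP (s == g)) => [sg | /reach_approxS ->].
  by have -> : reach_approx M g n.+1 s = fun=> 1;
    [apply: functional_extensionality => u; rewrite /= sg | apply: continuous_const].
by apply: continuous_expconv => y; apply: continuous_expect => s'; apply: IHn.
Qed.

Lemma continuous_step_reach n s t : continuous (step_reach n s) t.
Proof.
by apply: continuous_expect => s'; apply: continuous_reach_approx.
Qed.

Lemma step_reach_bounds n s u : (forall s', 0 <= reach_approx M g n s' u <= 1) ->
  0 <= step_reach n s u <= 1.
Proof. by apply: expect_bounds; [apply: P_ge0 | apply: P_sum1]. Qed.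

Lemma reach_approx_bounds n s t : 0 <= t -> 0 <= reach_approx M g n s t <= 1.
Proof.
elim: n s t => [|n IHn] s t t0; first by rewrite /=; case: (s == g); lra.
case: (boolP (s == g)) => [sg | /reach_approxS ->]; first by rewrite /= sg; lra.
apply: expconv_bounds t0 _ _ => [|y|y [y0 _]]; first exact: E_pos.
  exact: continuous_step_reach.
by apply: step_reach_bounds => s'; apply: IHn.
Qed.

Section Bisimulation.
Variables (Rel : rel S) (eps delta : R).
Hypotheses (eps_ge0 : 0 <= eps) (delta_ge0 : 0 <= delta).
Hypothesis goal_label : forall s, L M s = L M g -> s = g.
Hypothesis bisim : is_eps_delta_bisim M eps delta Rel.

Let Rel_sym a b : Rel a b -> Rel b a := proj1 (proj2 bisim) a b.

Lemma bisim_eq_goal a b : Rel a b -> (a == g) = (b == g).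
Proof.
move=> Rab; have [Lab_eq _] := proj2 (proj2 bisim) a b Rab.
by apply/eqP/eqP => [ag | bg]; apply: goal_label;
  [rewrite -Lab_eq ag | rewrite Lab_eq bg].
Qed.

Lemma bisim_rate_le a b : Rel a b -> E M b <= E M a * exp delta.
Proof.
move=> Rab; have [_ [/Rabs_le_between ln_E _]] := proj2 (proj2 bisim) a b Rab.
rewrite -(exp_ln _ (E_pos M b)) -(exp_ln _ (E_pos M a)) -exp_plus.
by apply: exp_le_compat; lra.
Qed.

Lemma step_reach_bisim_le n a b y beta : Rel a b -> 0 <= beta <= 1 ->
  (forall a' b', Rel a' b' ->
     Rabs (reach_approx M g n a' y - reach_approx M g n b' y) <= beta) ->
  (forall s', 0 <= reach_approx M g n s' y <= 1) ->
  Rabs (step_reach n a y - step_reach n b y) <= eps + (1 - eps) * beta.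
Proof.
move=> Rab beta01 IH F01.
have F_rel a' b' : Rel a' b' -> reach_approx M g n a' y - reach_approx M g n b' y <= beta.
  by move/IH/Rabs_le_between; lra.
have le_dir s s' :
    Rel s s' -> step_reach n s y <= step_reach n s' y + (eps + (1 - eps) * beta).
  move=> Rss'; have [_ [_ P_le]] := proj2 (proj2 bisim) s s' Rss'.
  exact: (expect_le_rel (P_ge0 M s) (P_ge0 M s') eps_ge0 P_le (P_sum1 M s) F01 beta01 F_rel).
by apply: Rabs_le; have := le_dir _ _ Rab; have := le_dir _ _ (Rel_sym Rab); lra.
Qed.

Let c := max_rate M * (exp delta * (1 + eps) - 1).

Let exp_delta_ge1 : 1 <= exp delta.
Proof. by rewrite -exp_0; apply: exp_le_compat. Qed.

Let c_ge0 : 0 <= c.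
Proof.
have q_ge0 := max_rate_ge0; have delta1 := exp_delta_ge1.
by apply: Rmult_le_pos; nra.
Qed.

Lemma bisim_rate_gap_le a b : Rel a b -> E M b - E M a + E M a * eps <= c.
Proof.
move=> Rab; have := bisim_rate_le Rab.
have q_ge0 := max_rate_ge0; have delta1 := exp_delta_ge1.
have : 0 <= max_rate M * eps * (exp delta - 1).
  by apply: Rmult_le_pos; [apply: Rmult_le_pos|]; lra.
have : E M a * (exp delta - 1 + eps) <= max_rate M * (exp delta - 1 + eps).
  by apply: Rmult_le_compat_r; [lra | apply: E_le_max_rate].
by rewrite /c; nra.
Qed.

Lemma reach_approx_bisim_le n a b u : Rel a b -> 0 <= u ->
  Rabs (reach_approx M g n a u - reach_approx M g n b u) <= 1 - exp (- (c * u)).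
Proof.
elim: n a b u => [|n IHn] a b u Rab u0.
  by rewrite /= (bisim_eq_goal Rab) Rminus_diag Rabs_R0; case: (one_sub_exp_bounds c_ge0 u0).
case: (boolP (a == g)) => [ag | ang].
  have bg : b == g by rewrite -(bisim_eq_goal Rab).
  by rewrite /= ag bg Rminus_diag Rabs_R0; case: (one_sub_exp_bounds c_ge0 u0).
wlog Eab : a b Rab ang / E M a <= E M b => [hwlog|].
  case: (Rle_lt_dec (E M a) (E M b)) => [|/Rlt_le Eba]; first exact: hwlog.
  rewrite Rabs_minus_sym; apply: hwlog Eba; first exact: Rel_sym.
  by rewrite -(bisim_eq_goal Rab).
have bng : b != g by rewrite -(bisim_eq_goal Rab).
rewrite (reach_approxS _ ang) (reach_approxS _ bng).
apply: (Rabs_expconv_sub_le (eps := eps)) => //.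
- exact: E_pos.
- exact: bisim_rate_gap_le.
- exact: continuous_step_reach.
- exact: continuous_step_reach.
- move=> y [y0 _]; have F01 s' := reach_approx_bounds n s' y0.
  split; first exact: step_reach_bounds.
  split; first exact: step_reach_bounds.
  apply: (step_reach_bisim_le Rab (one_sub_exp_bounds c_ge0 y0) _ F01).
  by move=> a' b' Ra'b'; apply: IHn.
Qed.

End Bisimulation.
End Reachability.

Theorem proposition3 (S : finType) (Lab : Type) (M : ctmc S Lab) (g : S)
  (eps delta t : R) :
  goal_assumptions M g ->
  0 <= eps -> 0 <= delta -> 0 <= t ->
  forall s s' : S, bisimilar M eps delta s s' ->
  Rabs (reach_prob M g s t - reach_prob M g s' t) <=
    1 - exp (- (max_rate M * t * (exp delta * (1 + eps) - 1))).
Proof.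
move=> [_ [goal_label _]] eps0 delta0 t0 s s' [Rel [bisim Rss']].
rewrite /reach_prob; apply: (Rabs_real_Sup_seq_sub_le (c := 1)) => n.
- exact: (proj2 (reach_approx_bounds M g n s t0)).
- exact: (proj2 (reach_approx_bounds M g n s' t0)).
- have -> : max_rate M * t * (exp delta * (1 + eps) - 1) =
            max_rate M * (exp delta * (1 + eps) - 1) * t by ring.
  exact: (reach_approx_bisim_le eps0 delta0 goal_label bisim n Rss' t0).
Qed.
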